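(* Let $J$ be the free algebra on $X$ in the variety of Jordan algebras (with product $\circ$) that additionally satisfy, for all $a,b,c,d$, \[ ((a\circ b)\circ c)\circ d=((a\circ c)\circ b)\circ d=((a\circ b)\circ d)\circ c=(a\circ b)\circ(c\circ d). \] Then the algebra homomorphism $J\to\mathcal{A}s_3\langle X\rangle^{(+)}$ which is the identity on $X$ is injective; that is, $J$ embeds into the free third-type associative algebra $\mathcal{A}s_3\langle X\rangle$ equipped with the anti-commutator $\{a,b\}=ab+ba$.
   Context: An associative algebra is called of the third type if it satisfies $abc+bac-bca-cba=0$ for all $a,b,c$. $\mathcal{A}s_3\langle X\rangle$ is the free such algebra on a countable set $X$ over a field of characteristic $0$, and $\mathcal{A}s_3\langle X\rangle^{(+)}$ denotes the same vector space with product $\{a,b\}=ab+ba$; this is a Jordan algebra (commutative, satisfying $((a\circ a)\circ b)\circ a=(a\circ a)\circ(b\circ a)$), and it is known to satisfy $\{\{\{a,b\},c\},d\}=\{\{\{a,c\},b\},d\}=\{\{\{a,b\},d\},c\}=\{\{a,b\},\{c,d\}\}$, so the homomorphism in the claim exists. *)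

From HB Require Import structures.
From mathcomp Require Import all_boot all_order all_algebra.
Set Implicit Arguments. Unset Strict Implicit. Unset Printing Implicit Defensive.
Import GRing.Theory.
Local Open Scope ring_scope.

(* Nonassociative (non-unital) polynomial expressions over F in the countable
   set of variables X := nat.  Elements of the free nonassociative algebra
   F{X} are such terms up to the algebra laws. *)
Inductive term (F : Type) : Type :=
| tVar : nat -> term F
| tZero : term F
| tAdd : term F -> term F -> term F
| tScale : F -> term F -> term F
| tMul : term F -> term F -> term F.
Arguments tVar {F} _.
Arguments tZero {F}.

Section Eval.
Variables (F : fieldType) (V : lmodType F) (mul : V -> V -> V) (v : nat -> V).
Fixpoint eval (t : term F) : V :=
  match t with
  | tVar n => v n
  | tZero => 0
  | tAdd a b => eval a + eval b
  | tScale c a => c *: eval a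
  | tMul a b => mul (eval a) (eval b)
  end.
End Eval.

Definition bilinear_prod (F : fieldType) (V : lmodType F) (mul : V -> V -> V) :=
  (forall (c : F) (x y z : V), mul (c *: x + y) z = c *: mul x z + mul y z) /\
  (forall (c : F) (x y z : V), mul x (c *: y + z) = c *: mul x y + mul x z).

Definition special_jordan_variety (F : fieldType) (V : lmodType F)
    (o : V -> V -> V) : Prop :=
  bilinear_prod o /\
  (forall a b, o a b = o b a) /\
  (forall a b, o (o (o a a) b) a = o (o a a) (o b a)) /\
  (forall a b c d,
     o (o (o a b) c) d = o (o (o a c) b) d /\
     o (o (o a c) b) d = o (o (o a b) d) c /\
     o (o (o a b) d) c = o (o a b) (o c d)).

Definition as3_variety (F : fieldType) (V : lmodType F)
    (m : V -> V -> V) : Prop :=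
  bilinear_prod m /\
  (forall a b c, m (m a b) c = m a (m b c)) /\
  (forall a b c,
     m (m a b) c + m (m b a) c - m (m b c) a - m (m c b) a = 0).

(* Equality in the relatively free algebra J on X: p = q in J iff p - q is an
   identity of the variety, i.e. p and q agree under every evaluation in every
   algebra of the variety. *)
Definition J_eq (F : fieldType) (p q : term F) : Prop :=
  forall (V : lmodType F) (o : V -> V -> V) (v : nat -> V),
    special_jordan_variety o -> eval o v p = eval o v q.

Definition As3_eq (F : fieldType) (p q : term F) : Prop :=
  forall (V : lmodType F) (m : V -> V -> V) (v : nat -> V),
    as3_variety m -> eval m v p = eval m v q.

(* The homomorphism J -> As_3<X>^(+) that is the identity on X, on
   representatives: each product a o b is sent to {a,b} = ab + ba. *)
Fixpoint plus_tr (F : fieldType) (t : term F) : term F :=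
  match t with
  | tVar n => tVar n
  | tZero => tZero
  | tAdd a b => tAdd (plus_tr a) (plus_tr b)
  | tScale c a => tScale c (plus_tr a)
  | tMul a b => tAdd (tMul (plus_tr a) (plus_tr b)) (tMul (plus_tr b) (plus_tr a))
  end.

From HB Require Import structures.
From mathcomp Require Import all_boot all_order all_algebra.
From mathcomp Require Import zify.
From mathcomp.algebra_tactics Require Import ring.
From mathcomp Require Import mpoly.
Set Implicit Arguments. Unset Strict Implicit. Unset Printing Implicit Defensive.
Import GRing.Theory.
Local Open Scope ring_scope.

(* Using the identities, a product of left-normed words (..(x1 x2)..)xn is again
   left-normed, so every element of J is a combination of such words.  A
   left-normed word is symmetric in its letters, except in length 3, where
   (x y) z is only symmetric in x and y.  Hence p = q holds in J as soon as the
   coefficients of p and q have equal sums on each of these classes of words.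
   Those sums are detected in third-type associative algebras: in a polynomial
   ring, whose anticommutator 2ab only sees the multiset of letters, and in a
   nilpotent 7-dimensional algebra whose anticommutator only sees words of
   length 3 and separates (x y) z from (x z) y.  In characteristic 0 every class
   indicator is a linear combination of these two kinds of functionals. *)

Section AdjacentSwaps.
Variables (A : eqType) (R : Type).

Definition swap_invariant (n : nat) (f : seq A -> R) :=
  forall l1 l2 a b, (size l1 + size l2 + 2)%N = n ->
    f (l1 ++ a :: b :: l2) = f (l1 ++ b :: a :: l2).

Lemma swap_invariant_cons n f x :
  swap_invariant n f -> swap_invariant n.-1 (fun l => f (x :: l)).
Proof. by move=> f_inv l1 l2 a b sz; rewrite -!cat_cons f_inv //=; lia. Qed.

Lemma swap_invariant_move_front s1 s2 x n f :
  swap_invariant n f -> (size s1 + size s2 + 1)%N = n ->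
  f (s1 ++ x :: s2) = f (x :: s1 ++ s2).
Proof.
elim: s1 n f => [//|y s1 IH] n f f_inv sz /=.
rewrite (IH _ _ (swap_invariant_cons y f_inv)); last by move: sz => /=; lia.
by rewrite -(cat0s (y :: x :: _)) f_inv //=; move: sz => /=; rewrite size_cat; lia.
Qed.

Lemma swap_invariant_perm s t f :
  swap_invariant (size s) f -> perm_eq s t -> f s = f t.
Proof.
elim: s t f => [|x s IH] t f f_inv st.
  by move/perm_size: st => /esym/size0nil ->.
have xt : x \in t by rewrite -(perm_mem st) mem_head.
case/splitPr: xt st => t1 t2 st; have := perm_size st; rewrite size_cat /= => sz.
rewrite (swap_invariant_move_front x f_inv) /=; last by lia.
apply: (IH _ (fun l => f (x :: l)) (swap_invariant_cons x f_inv)).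
by rewrite -(perm_cons x) (perm_trans st) // -cat1s perm_catCA.
Qed.

End AdjacentSwaps.

Section ClassSums.
Variables (F : fieldType) (V : lmodType F) (T : Type).

Definition pairing (L : seq (F * T)) (phi : T -> F) : F := \sum_(e <- L) e.1 * phi e.2.

Lemma eq_pairing L phi psi : phi =1 psi -> pairing L phi = pairing L psi.
Proof. by move=> eq_phi; apply: eq_bigr => e _; rewrite eq_phi. Qed.

Lemma pairingD L phi psi :
  pairing L (fun s => phi s + psi s) = pairing L phi + pairing L psi.
Proof. by rewrite /pairing -big_split; apply: eq_bigr => e _; rewrite mulrDr. Qed.

Lemma pairingZ L c phi : pairing L (fun s => c * phi s) = c * pairing L phi.
Proof. by rewrite /pairing mulr_sumr; apply: eq_bigr => e _; rewrite mulrCA. Qed.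

Lemma pairing_indicator L (P : pred T) :
  pairing L (fun s => (P s)%:R) = \sum_(e <- L | P e.2) e.1.
Proof. by rewrite big_mkcond; apply: eq_bigr => e _; case: (P e.2); rewrite ?mulr1 ?mulr0. Qed.

Variables (r : rel T) (f : T -> V).
Hypotheses (r_equiv : equivalence_rel r) (f_r : forall s t, r s t -> f s = f t).

Lemma class_sum_eq0 (L : seq (F * T)) :
  (forall t, f t = 0 \/ \sum_(e <- L | r e.2 t) e.1 = 0) ->
  \sum_(e <- L) e.1 *: f e.2 = 0.
Proof.
have r_refl x : r x x by have [] := r_equiv x x x.
have r_trans x y z : r x y -> r y z -> r x z.
  by move=> rxy; have [_ ->] := r_equiv x y z.
have r_sym x y : r x y -> r y x by move=> rxy; rewrite -(r_equiv x y x).2.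
have [k] := ubnP (size L); elim: k L => // k IH [|e0 L] /= sizeL L0.
  by rewrite big_nil.
set t0 := e0.2; rewrite (bigID (fun e => r e.2 t0)) /=.
have -> : \sum_(e <- e0 :: L | r e.2 t0) e.1 *: f e.2 = 0.
  transitivity ((\sum_(e <- e0 :: L | r e.2 t0) e.1) *: f t0).
    by rewrite scaler_suml; apply: eq_bigr => e /f_r ->.
  by have [-> | ->] := L0 t0; rewrite ?scaler0 ?scale0r.
rewrite add0r -big_filter; apply: IH => [|t].
  by rewrite /= r_refl /= size_filter; apply: leq_ltn_trans (count_size _ _) _.
rewrite big_filter_cond; have [|sum0] := L0 t; [by left | right].
have [rt0 | nrt0] := boolP (r t t0).
  by rewrite big1 // => e /andP [/negP nre0 /r_trans /(_ rt0)].
rewrite -[RHS]sum0; apply: eq_bigl => e; have [ret|] := boolP (r e.2 t); last by rewrite andbF.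
by rewrite andbT; apply: contra nrt0; apply: r_trans (r_sym _ _ ret).
Qed.

Lemma class_sum_eq (L1 L2 : seq (F * T)) :
  (forall t, f t = 0 \/ pairing L1 (fun s => (r s t)%:R) = pairing L2 (fun s => (r s t)%:R)) ->
  \sum_(e <- L1) e.1 *: f e.2 = \sum_(e <- L2) e.1 *: f e.2.
Proof.
move=> L12; apply/eqP; rewrite -subr_eq0; apply/eqP.
have -> : \sum_(e <- L1) e.1 *: f e.2 - \sum_(e <- L2) e.1 *: f e.2 =
    \sum_(e <- L1 ++ [seq (- e.1, e.2) | e <- L2]) e.1 *: f e.2.
  by rewrite big_cat big_map -sumrN; congr (_ + _); apply: eq_bigr => e _; rewrite scaleNr.
apply: class_sum_eq0 => // t; have [|eq12] := L12 t; [by left | right].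
rewrite big_cat big_map sumrN -!(pairing_indicator _ (r^~ t)) eq12; exact: subrr.
Qed.

End ClassSums.

(* The identities of [special_jordan_variety] other than the Jordan identity,
   which the proof does not need. *)
Record sj4_variety (F : fieldType) (V : lmodType F) (o : V -> V -> V) : Prop := {
  sj4_bilinear : bilinear_prod o;
  sj4_comm : forall a b, o a b = o b a;
  sj4_swap23 : forall a b c d, o (o (o a b) c) d = o (o (o a c) b) d;
  sj4_swap34 : forall a b c d, o (o (o a b) c) d = o (o (o a b) d) c;
  sj4_assoc : forall a b c d, o (o a b) (o c d) = o (o (o a b) c) d }.

Lemma special_jordan_sj4 (F : fieldType) (V : lmodType F) (o : V -> V -> V) :
  special_jordan_variety o -> sj4_variety o.
Proof.
case=> bil [comm [_ id4]]; split=> // a b c d;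
  by have [e1 [e2 e3]] := id4 a b c d; rewrite ?e1 ?e2 ?e3.
Qed.

(* Left-normed words: [:: x1; ...; xn] stands for (..(x1 o x2) o ..) o xn, and
   [::] for 0.  By commutativity the longer factor of a product can be put
   first, and a left-normed word of length at least two absorbs the other
   factor as a suffix. *)
Definition word_mul (s t : seq nat) : seq nat :=
  if (s == [::]) || (t == [::]) then [::]
  else if (size s < size t)%N then t ++ s else s ++ t.

Fixpoint normal_form (F : fieldType) (t : term F) : seq (F * seq nat) :=
  match t with
  | tVar n => [:: (1, [:: n])]
  | tZero => [::]
  | tAdd a b => normal_form a ++ normal_form b
  | tScale c a => [seq (c * e.1, e.2) | e <- normal_form a]
  | tMul a b => [seq (e.1 * f.1, word_mul e.2 f.2) | e <- normal_form a, f <- normal_form b]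
  end.

Definition word_equiv (s t : seq nat) : bool :=
  perm_eq s t && ((size t != 3%N) || (nth 0%N s 2 == nth 0%N t 2)).

Lemma word_equiv_equiv : equivalence_rel word_equiv.
Proof.
apply/equivalence_relP; split=> [s|s t /andP [st eq_nth] u].
  by rewrite /word_equiv perm_refl eqxx orbT.
rewrite /word_equiv (permPl st); case tu: (perm_eq t u) => //=.
case: eqP => //= u3; move: eq_nth; rewrite (perm_size tu) u3 /= => /eqP -> //.
Qed.

Lemma word_equiv_swap12 a b c s : word_equiv s [:: a; b; c] = word_equiv s [:: b; a; c].
Proof.
have abc : perm_eq [:: a; b; c] [:: b; a; c] by rewrite (perm_catCA [:: a] [:: b] [:: c]).
by rewrite /word_equiv (permPr abc).
Qed.

Section LeftNormed.
Variables (F : fieldType) (V : lmodType F) (o : V -> V -> V) (v : nat -> V).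
Hypothesis oJ : sj4_variety o.

Lemma prod0l y : o 0 y = 0.
Proof.
have := (sj4_bilinear oJ).1 1 0 0 y; rewrite !scale1r addr0.
by move/(congr1 (fun z => z - o 0 y)); rewrite subrr addrK => <-.
Qed.

Lemma prod0r y : o y 0 = 0.
Proof. by rewrite (sj4_comm oJ) prod0l. Qed.

Lemma prod_suml (I : Type) (r : seq I) (c : I -> F) (x : I -> V) z :
  o (\sum_(i <- r) c i *: x i) z = \sum_(i <- r) c i *: o (x i) z.
Proof.
elim: r => [|i r IH]; first by rewrite !big_nil prod0l.
by rewrite !big_cons (sj4_bilinear oJ).1 IH.
Qed.

Lemma prod_sumr (I : Type) (r : seq I) (c : I -> F) (x : I -> V) z :
  o z (\sum_(i <- r) c i *: x i) = \sum_(i <- r) c i *: o z (x i).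
Proof.
by rewrite (sj4_comm oJ) prod_suml; apply: eq_bigr => i _; rewrite (sj4_comm oJ).
Qed.

Definition lnorm (a : V) (r : seq nat) : V := foldl (fun a y => o a (v y)) a r.
Definition lmon (s : seq nat) : V := if s is x :: r then lnorm (v x) r else 0.

Lemma lnorm0 r : lnorm 0 r = 0.
Proof. by elim: r => //= y r; rewrite /lnorm /= prod0l. Qed.

Lemma lmon_cat s t : s != [::] -> lmon (s ++ t) = lnorm (lmon s) t.
Proof. by case: s => [//|x s] _; rewrite /= /lnorm foldl_cat. Qed.

Lemma lmon_rcons s y : s != [::] -> lmon (rcons s y) = o (lmon s) (v y).
Proof. by move=> sn; rewrite -cats1 lmon_cat. Qed.

Lemma lmon_mul_long s t :
  (1 < size s)%N -> t != [::] -> o (lmon s) (lmon t) = lmon (s ++ t).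
Proof.
move=> s2; have sn : s != [::] by case: s s2.
have [A [x lmon_s]] : exists A x, lmon s = o A (v x).
  case/lastP: s s2 {sn} => [//|s x] s2.
  by exists (lmon s), x; rewrite lmon_rcons //; case: s s2.
elim/last_ind: t => [//|t y IH] _.
case: (eqVneq t [::]) => [->|tn]; first by rewrite cats1 [RHS]lmon_rcons.
rewrite lmon_rcons // lmon_s (sj4_assoc oJ) -lmon_s IH // -rcons_cat lmon_rcons //.
by rewrite -size_eq0 size_cat addn_eq0 negb_and size_eq0 sn.
Qed.

Lemma lmon_mul s t : o (lmon s) (lmon t) = lmon (word_mul s t).
Proof.
rewrite /word_mul; case: (eqVneq s [::]) => [->|sn]; first by rewrite prod0l.
case: (eqVneq t [::]) => [->|tn] /=; first by rewrite prod0r.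
case: ltnP => st.
  by rewrite (sj4_comm oJ) lmon_mul_long //; apply: leq_trans st; case: s sn.
case: (ltnP 1 (size s)) => s2; first exact: lmon_mul_long.
by case: s sn s2 st => [|x [|]] // _ _; case: t tn => [|y [|]].
Qed.

Lemma eval_normal_form (p : term F) :
  eval o v p = \sum_(e <- normal_form p) e.1 *: lmon e.2.
Proof.
elim: p => [n||a IHa b IHb|c a IHa|a IHa b IHb] /=.
- by rewrite big_seq1 scale1r.
- by rewrite big_nil.
- by rewrite big_cat IHa IHb.
- by rewrite IHa big_map scaler_sumr; apply: eq_bigr => e _; rewrite scalerA.
rewrite big_allpairs_dep IHa IHb prod_suml; apply: eq_bigr => e _.
rewrite prod_sumr scaler_sumr; apply: eq_bigr => f _.
by rewrite lmon_mul scalerA.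
Qed.

Lemma lmon_swap_invariant n : n != 3%N -> swap_invariant n lmon.
Proof.
move=> n3 [|x [|z l1]] l2 a b sz.
- by rewrite /= (sj4_comm oJ).
- by case: l2 sz => [|y l2] sz; [rewrite -sz in n3 | rewrite /= /lnorm /= (sj4_swap23 oJ)].
rewrite !lmon_cat //.
have [A [w ->]] : exists A w, lmon [:: x, z & l1] = o A (v w).
  by exists (lmon (belast x (z :: l1))), (last x (z :: l1)); rewrite -lmon_rcons -?lastI.
by rewrite /= (sj4_swap34 oJ).
Qed.

Lemma lmon_perm s t : size s != 3%N -> perm_eq s t -> lmon s = lmon t.
Proof. by move=> s3; apply: swap_invariant_perm; apply: lmon_swap_invariant. Qed.

Lemma lmon_word_equiv s t : word_equiv s t -> lmon s = lmon t.
Proof.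
case/andP=> st; have [t3|t3] := eqVneq (size t) 3%N; last first.
  by move=> _; rewrite (lmon_perm _ st) // (perm_size st).
move=> /= /eqP; have := perm_size st; rewrite t3.
case: t t3 st => [|a' [|b' [|c' [|]]]] // _.
case: s => [|a [|b [|c [|]]]] // st _ /= c_c'; subst c'.
have ab : perm_eq [:: a; b] [:: a'; b'] by rewrite -(perm_cat2r [:: c]).
by have /= -> := lmon_perm (isT : size [:: a; b] != 3%N) ab.
Qed.

End LeftNormed.

Definition anticomm (R : Type) (V : zmodType) (m : R -> R -> V) (a b : R) : V :=
  m a b + m b a.

Lemma eval_plus_tr (F : fieldType) (V : lmodType F) (m : V -> V -> V) w p :
  eval m w (plus_tr p) = eval (anticomm m) w p.
Proof. by elim: p => //= [a -> b -> | c a -> | a -> b ->]. Qed.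

Lemma scalar_pairing (F : fieldType) (V : lmodType F) (T : Type) (phi : {scalar V})
    (L : seq (F * T)) (x : T -> V) :
  phi (\sum_(e <- L) e.1 *: x e.2) = pairing L (phi \o x).
Proof. by rewrite linear_sum; apply: eq_bigr => e _; rewrite scalarZ. Qed.

Section CommutativeModels.
Variables (F : fieldType) (A : comAlgType F).

Lemma as3_comm_mul : as3_variety (@GRing.mul A).
Proof.
split; [split|split] => *; rewrite ?mulrDl ?mulrDr -?scalerAl -?scalerAr ?mulrA //.
by ring.
Qed.

Lemma sj4_anticomm_mul : sj4_variety (anticomm (@GRing.mul A)).
Proof.
rewrite /anticomm; split=> [|a b|a b c d|a b c d|a b c d]; try ring.
by split=> c x y z; rewrite ?mulrDl ?mulrDr -?scalerAl -?scalerAr scalerDr; ring.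
Qed.

End CommutativeModels.

Lemma As3_eq_pairing (F : fieldType) (V : lmodType F) (m : V -> V -> V) (w : nat -> V)
    (phi : {scalar V}) (p q : term F) :
  As3_eq (plus_tr p) (plus_tr q) -> as3_variety m -> sj4_variety (anticomm m) ->
  pairing (normal_form p) (phi \o lmon (anticomm m) w) =
  pairing (normal_form q) (phi \o lmon (anticomm m) w).
Proof.
move=> pq mA mJ; rewrite -!scalar_pairing -!(eval_normal_form w mJ) -!eval_plus_tr.
by rewrite (pq _ _ _ mA).
Qed.

Section PolynomialModel.
Variables (F : fieldType) (n : nat).
Local Notation W := {mpoly F[n.+1]}.
Local Notation xvar i := ('X_(inord i) : W).
Local Notation lmonX := (lmon (anticomm (@GRing.mul W)) (fun i => xvar i)).

Definition word_monom (s : seq nat) : 'X_{1..n.+1} := (\sum_(i <- s) U_(inord i))%MM.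

Lemma lnorm_monomial k mu r :
  lnorm (anticomm (@GRing.mul W)) (fun i => xvar i) (k *: 'X_[mu]) r =
  (k * 2%:R ^+ size r) *: 'X_[(mu + word_monom r)%MM].
Proof.
elim: r k mu => [|y r IH] k mu; first by rewrite /= /word_monom big_nil addm0 mulr1.
have step : anticomm *%R (k *: 'X_[mu]) (xvar y) = (k * 2%:R) *: 'X_[(mu + U_(inord y))%MM].
  rewrite /anticomm mpolyXD -scalerAl -scalerAr (mulrC (xvar y)) -mulr2n.
  by rewrite -scaler_nat scalerA mulrC.
by rewrite [LHS]/= step IH /word_monom big_cons addmA exprS mulrA.
Qed.

Lemma lmon_poly s : s != [::] -> lmonX s = 2%:R ^+ (size s).-1 *: 'X_[word_monom s].
Proof.
case: s => [//|x s] _; rewrite /= -[xvar x]scale1r.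
by rewrite lnorm_monomial mul1r /word_monom big_cons.
Qed.

Lemma word_monom_eq s t : all (fun i => i <= n)%N (s ++ t) ->
  (word_monom s == word_monom t) = perm_eq s t.
Proof.
move=> /allP st_n; apply/eqP/idP => [eq_st|]; last exact: perm_big.
have count_inord u x : {subset u <= s ++ t} -> (x <= n)%N ->
    count (fun i => inord i == (inord x : 'I_n.+1)) u = count_mem x u.
  move=> ust xn; apply: eq_in_count => i /ust /st_n /= i_n.
  by apply/eqP/eqP => [/(congr1 (@nat_of_ord _))|->]; rewrite // !inordK.
have monomE u j : word_monom u j = count (fun i => inord i == j) u.
  elim: u => [|x u IH]; first by rewrite /word_monom big_nil mnm0E.
  by rewrite /word_monom big_cons mnmDE mnm1E IH.
apply/allP => x /st_n /= xn; apply/eqP.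
have sub_s : {subset s <= s ++ t} by move=> i; rewrite mem_cat => ->.
have sub_t : {subset t <= s ++ t} by move=> i; rewrite mem_cat => ->; rewrite orbT.
by rewrite -(count_inord s x) // -(count_inord t x) // -!monomE eq_st.
Qed.

Lemma mcoeff_lmon_poly s t : all (fun i => i <= n)%N (s ++ t) -> t != [::] ->
  mcoeff (word_monom t) (lmonX s) = 2%:R ^+ (size t).-1 * (perm_eq s t)%:R.
Proof.
move=> st_n tn; have [-> | sn] := eqVneq s [::].
  have /negbTE -> : ~~ perm_eq [::] t by apply: contra tn => /perm_size /= /esym /size0nil ->.
  by rewrite mcoeff0 mulr0.
rewrite lmon_poly // mcoeffZ mcoeffX word_monom_eq //.
by have [/perm_size -> | _] := boolP (perm_eq s t); rewrite ?mulr0 ?mulr1.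
Qed.

End PolynomialModel.

Section SevenDimensionalModel.
Variable F : fieldType.
Local Notation W7 := 'rV[F]_7.

Definition coord7 (k : nat) (x : W7) : F := x ord0 (inord k).

Fact coord7_is_scalar k : scalar (coord7 k).
Proof. by move=> c x y; rewrite /coord7 !mxE. Qed.
HB.instance Definition _ k :=
  GRing.isLinear.Build F W7 F *%R (coord7 k) (coord7_is_scalar k).

Lemma row7P (x y : W7) : (forall k, (k < 7)%N -> coord7 k x = coord7 k y) -> x = y.
Proof.
by move=> xy; apply/rowP => i; have := xy i (ltn_ord i); rewrite /coord7 inord_val (ord1 ord0).
Qed.

Definition mul7_coord (f g : nat -> F) (k : nat) : F :=
  match k with
  | 3 => f 0%N * g 1%N - f 1%N * g 0%N
  | 4 => f 1%N * g 2%N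
  | 5 => f 0%N * g 2%N
  | 6 => f 3%N * g 2%N + f 0%N * g 4%N - f 1%N * g 5%N
  | _ => 0
  end.

Definition mul7 (x y : W7) : W7 := \row_(k < 7) mul7_coord (coord7^~ x) (coord7^~ y) k.

Lemma coord7_mul7 x y k : (k < 7)%N ->
  coord7 k (mul7 x y) = mul7_coord (coord7^~ x) (coord7^~ y) k.
Proof. by move=> k7; rewrite /coord7 mxE inordK. Qed.

Ltac coord7_ring :=
  rewrite ?/anticomm; apply: row7P => ? ?;
  do 7?[match goal with k : nat, k7 : is_true (_ < 7)%N |- _ => case: k k7 => [|?] ? end];
  repeat progress rewrite ?(linearD, linearN, linearB, scalarZ, linear0, coord7_mul7) //=;
  ring.

Lemma as3_mul7 : as3_variety mul7.
Proof. by split; [split|split] => *; coord7_ring. Qed.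

Lemma anticomm_mul7_deg4 a b c d :
  anticomm mul7 (anticomm mul7 (anticomm mul7 a b) c) d = 0.
Proof. coord7_ring. Qed.

Lemma anticomm_mul7_deg22 a b c d :
  anticomm mul7 (anticomm mul7 a b) (anticomm mul7 c d) = 0.
Proof. coord7_ring. Qed.

Lemma sj4_anticomm_mul7 : sj4_variety (anticomm mul7).
Proof.
split=> [|a b|a b c d|a b c d|a b c d]; rewrite ?anticomm_mul7_deg4 ?anticomm_mul7_deg22 //.
- by split=> *; coord7_ring.
- exact: addrC.
Qed.

(* [probe G s] is the e_6-coordinate of the left-normed word s in this
   algebra when x_i is sent to G i 0 e_0 + G i 1 e_1 + G i 2 e_2. *)
Definition gen7 (G : nat -> nat -> F) (i : nat) : W7 :=
  \row_(k < 7) (if (k < 3)%N then G i k else 0).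

Definition probe (G : nat -> nat -> F) (s : seq nat) : F :=
  match s with
  | [:: x; y; z] => G z 0%N * (G x 1%N * G y 2%N + G x 2%N * G y 1%N)
                  - G z 1%N * (G x 0%N * G y 2%N + G x 2%N * G y 0%N)
  | _ => 0
  end.

Lemma coord6_lmon7 G s : coord7 6 (lmon (anticomm mul7) (gen7 G) s) = probe G s.
Proof.
have coord_gen k i : (k < 7)%N -> coord7 k (gen7 G i) = if (k < 3)%N then G i k else 0.
  by move=> k7; rewrite /coord7 mxE inordK.
case: s => [|x [|y [|z [|u r]]]] /=; rewrite ?linear0 ?coord_gen //.
1,2: by rewrite /anticomm; repeat progress rewrite ?(linearD, coord7_mul7, coord_gen) //=; ring.
by rewrite anticomm_mul7_deg4 (lnorm0 _ sj4_anticomm_mul7) linear0.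
Qed.

End SevenDimensionalModel.

Ltac split_letters :=
  repeat (rewrite ?eqxx /=;
    try (match goal with H : is_true (?x != ?x) |- _ => by rewrite eqxx in H end);
    match goal with |- context [?a == ?b] =>
      is_var a; is_var b; case: (eqVneq a b) => [?|?]; subst end);
  rewrite ?eqxx /=.

Section WordClassIndicators.
Variable F : fieldType.
Local Notation "[ b ]" := (b%:R : F) (format "[ b ]").

Definition probe_at (u : seq nat) : seq nat -> F := probe (fun i k => (i == nth 0%N u k)%:R).

Lemma indicators_size3 s t : size t = 3%N -> size s != 3%N ->
  [word_equiv s t] = 0 /\ [perm_eq s t] = 0 /\ forall u, probe_at u s = 0 :> F.
Proof.
move=> t3 s3; have /negbTE st : ~~ perm_eq s t by apply: contra s3 => /perm_size ->; rewrite t3.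
by rewrite /word_equiv st; split=> //; split=> // u; case: s s3 {st} => [|? [|? [|? []]]].
Qed.

Lemma word_equiv_distinct x y z s : x != y -> x != z -> y != z ->
  3%:R * [word_equiv s [:: x; y; z]] =
  [perm_eq s [:: x; y; z]] + probe_at [:: z; x; y] s + probe_at [:: z; y; x] s.
Proof.
move=> xy xz yz; have [s3|s3] := eqVneq (size s) 3%N; last first.
  have [-> [-> pr0]] := indicators_size3 (erefl : size [:: x; y; z] = 3%N) s3.
  by rewrite !pr0; ring.
case: s s3 => [|u [|v [|w [|]]]] // _.
rewrite /word_equiv /probe_at /probe /perm_eq /=; split_letters; ring.
Qed.

Lemma word_equiv_xxz x z s : x != z ->
  3%:R * [word_equiv s [:: x; x; z]] = [perm_eq s [:: x; x; z]] + probe_at [:: z; x; x] s.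
Proof.
move=> xz; have [s3|s3] := eqVneq (size s) 3%N; last first.
  have [-> [-> pr0]] := indicators_size3 (erefl : size [:: x; x; z] = 3%N) s3.
  by rewrite !pr0; ring.
case: s s3 => [|u [|v [|w [|]]]] // _.
rewrite /word_equiv /probe_at /probe /perm_eq /=; split_letters; ring.
Qed.

Lemma word_equiv_xyx x y s : x != y ->
  3%:R * [word_equiv s [:: x; y; x]] = 2%:R * [perm_eq s [:: x; y; x]] + probe_at [:: x; y; x] s.
Proof.
move=> xy; have [s3|s3] := eqVneq (size s) 3%N; last first.
  have [-> [-> pr0]] := indicators_size3 (erefl : size [:: x; y; x] = 3%N) s3.
  by rewrite !pr0; ring.
case: s s3 => [|u [|v [|w [|]]]] // _.
rewrite /word_equiv /probe_at /probe /perm_eq /=; split_letters; ring.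
Qed.

Lemma word_equiv_xxx x s : word_equiv s [:: x; x; x] = perm_eq s [:: x; x; x].
Proof.
rewrite /word_equiv /=; case st: (perm_eq s _) => //=.
have s2 : (2 < size s)%N by rewrite (perm_size st).
by have := mem_nth 0%N s2; rewrite (perm_mem st) !inE !orbb.
Qed.

End WordClassIndicators.
Arguments probe_at {F}.

Section Detection.
Variable F : fieldType.
Hypothesis charF0 : [pchar F] =i pred0.
Variables p q : term F.
Hypothesis pq : As3_eq (plus_tr p) (plus_tr q).

Local Notation "[ b ]" := (b%:R : F) (format "[ b ]").

Lemma pairing_probe G : pairing (normal_form p) (probe G) = pairing (normal_form q) (probe G).
Proof.
have := As3_eq_pairing (gen7 G) (coord7 6) pq (@as3_mul7 F) (@sj4_anticomm_mul7 F).
by rewrite !(eq_pairing _ (coord6_lmon7 G)).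
Qed.

Lemma pairing_perm_eq t : t != [::] ->
  pairing (normal_form p) (fun s => [perm_eq s t]) =
  pairing (normal_form q) (fun s => [perm_eq s t]).
Proof.
move=> tn; set L := normal_form p ++ normal_form q.
pose n := (\max_(i <- flatten [seq e.2 | e <- L] ++ t) i)%N.
have bounded e : e \in L -> all (fun i => i <= n)%N (e.2 ++ t).
  move=> eL; apply/allP => i; rewrite mem_cat => /orP it.
  apply: (@leq_bigmax_seq _ _ xpredT id) => //; rewrite mem_cat.
  case: it => [ie|->]; last by rewrite orbT.
  by apply/orP; left; apply/flattenP; exists e.2 => //; apply: map_f.
have coefE L' : {subset L' <= L} ->
    pairing L' (mcoeff (word_monom n t) \o lmon (anticomm *%R) (fun i => 'X_(inord i))) =
    2%:R ^+ (size t).-1 * pairing L' (fun s => [perm_eq s t]).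
  move=> sub; rewrite -pairingZ /pairing !big_seq; apply: eq_bigr => e /sub /bounded e_n.
  by rewrite /= mcoeff_lmon_poly // mulrCA.
have := As3_eq_pairing (fun i => 'X_(inord i)) (mcoeff (word_monom n t)) pq
  (as3_comm_mul _) (sj4_anticomm_mul _).
have sub_p : {subset normal_form p <= L} by move=> e; rewrite /L mem_cat => ->.
have sub_q : {subset normal_form q <= L} by move=> e; rewrite /L mem_cat => ->; rewrite orbT.
by rewrite !coefE //; apply: mulfI; rewrite expf_neq0 // ((pcharf0P _).1 charF0).
Qed.

Lemma pairing_word_equiv3 x y z :
  pairing (normal_form p) (fun s => [word_equiv s [:: x; y; z]]) =
  pairing (normal_form q) (fun s => [word_equiv s [:: x; y; z]]).
Proof.
have perm_pairing u := pairing_perm_eq (isT : u :: _ != [::]).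
have times3 (phi psi : seq nat -> F) : (forall s, 3%:R * phi s = psi s) ->
    pairing (normal_form p) psi = pairing (normal_form q) psi ->
    pairing (normal_form p) phi = pairing (normal_form q) phi.
  move=> phi_psi eq_psi; apply: (mulfI (_ : 3%:R != 0)); first by rewrite ((pcharf0P _).1 charF0).
  by rewrite -!pairingZ !(eq_pairing _ phi_psi).
have [<-|xy] := eqVneq x y.
  have [<-|xz] := eqVneq x z.
    have class_xxx s : [word_equiv s [:: x; x; x]] = [perm_eq s [:: x; x; x]].
      by rewrite word_equiv_xxx.
    by rewrite !(eq_pairing _ class_xxx) perm_pairing.
  apply: (times3 _ _ (fun s => word_equiv_xxz F s xz)).
  by rewrite !pairingD perm_pairing pairing_probe.
have [->|zx] := eqVneq z x.
  apply: (times3 _ _ (fun s => word_equiv_xyx F s xy)).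
  by rewrite !pairingD !pairingZ perm_pairing pairing_probe.
have [->|zy] := eqVneq z y.
  have class_swap s : [word_equiv s [:: x; y; y]] = [word_equiv s [:: y; x; y]].
    by rewrite word_equiv_swap12.
  rewrite !(eq_pairing _ class_swap); have yx : y != x by rewrite eq_sym.
  apply: (times3 _ _ (fun s => word_equiv_xyx F s yx)).
  by rewrite !pairingD !pairingZ perm_pairing pairing_probe.
rewrite eq_sym in zx; rewrite eq_sym in zy.
apply: (times3 _ _ (fun s => word_equiv_distinct F s xy zx zy)).
by rewrite !pairingD perm_pairing !pairing_probe.
Qed.

Lemma pairing_word_equiv t : t != [::] ->
  pairing (normal_form p) (fun s => [word_equiv s t]) =
  pairing (normal_form q) (fun s => [word_equiv s t]).
Proof.
move=> tn; have [t3|t3] := eqVneq (size t) 3%N; last first.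
  have perm_t s : [word_equiv s t] = [perm_eq s t] by rewrite /word_equiv t3 andbT.
  by rewrite !(eq_pairing _ perm_t) pairing_perm_eq.
by case: t t3 tn => [|x [|y [|z [|]]]] // _ _; apply: pairing_word_equiv3.
Qed.

End Detection.

Theorem mainTheorem8 (F : fieldType) (charF0 : [pchar F]%R =i pred0)
  (p q : term F) :
  As3_eq (plus_tr p) (plus_tr q) -> J_eq p q.
Proof.
move=> pq V o v /special_jordan_sj4 oJ; rewrite !(eval_normal_form v oJ).
apply: (class_sum_eq word_equiv_equiv (lmon_word_equiv v oJ)) => t.
have [-> | tn] := eqVneq t [::]; [by left | right].
exact: pairing_word_equiv.
Qed.
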